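(* Let $\mathcal{A}$ be a complex Banach algebra with identity, let $a\in\mathcal{A}$ and let $(a_n)$ be a sequence in $\mathcal{A}$ such that $a_na=aa_n$ and $a_na_m=a_ma_n$ for all $n,m\in\mathbb{N}$. If $a_n\overset{\nu}{\to}a$ and $0$ is an accumulation point of $\sigma(a)$, then $\sigma(a_n)\to\sigma(a)$ in the Hausdorff metric.
   Context: $\sigma(x)$ denotes the spectrum of $x$ in $\mathcal{A}$. A sequence $(x_n)$ in $\mathcal{A}$ is $\nu$-convergent to $x$, written $x_n\overset{\nu}{\to}x$, if $(\|x_n\|)$ is bounded, $\|(x_n-x)x\|\to0$ and $\|(x_n-x)x_n\|\to0$. Convergence of spectra is with respect to the Hausdorff metric on nonempty compact subsets of $\mathbb{C}$. *)

From HB Require Import structures.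
From mathcomp Require Import all_boot all_order all_algebra.
From mathcomp Require Import all_classical all_reals all_analysis.
From mathcomp Require Import complex.
Set Implicit Arguments. Unset Strict Implicit. Unset Printing Implicit Defensive.
Import Order.TTheory GRing.Theory Num.Theory numFieldNormedType.Exports.
Local Open Scope classical_set_scope.
Local Open Scope ring_scope.

Record banach_alg (K : numFieldType) (V : completeNormedModType K) := BanachAlg {
  bmul : V -> V -> V;
  bone : V;
  bmulA : associative bmul;
  bmul1l : left_id bone bmul;
  bmul1r : right_id bone bmul;
  bmulDl : left_distributive bmul +%R;
  bmulDr : right_distributive bmul +%R;
  bmulZl : forall (k : K) (x y : V), bmul (k *: x) y = k *: bmul x y;
  bmulZr : forall (k : K) (x y : V), bmul x (k *: y) = k *: bmul x y;
  bone_neq0 : bone != 0;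
  bnormM : forall x y : V, `|bmul x y| <= `|x| * `|y| }.

Definition spectrum (K : numFieldType) (V : completeNormedModType K)
    (B : banach_alg V) (x : V) : set K :=
  [set l | ~ exists y : V, bmul B y (l *: bone B - x) = bone B
                        /\ bmul B (l *: bone B - x) y = bone B].

Definition nu_cvg (K : numFieldType) (V : completeNormedModType K)
    (B : banach_alg V) (x : nat -> V) (a : V) :=
  [/\ exists M : K, forall n, `|x n| <= M,
      (fun n => `|bmul B (x n - a) a|) @ \oo --> (0 : K) &
      (fun n => `|bmul B (x n - a) (x n)|) @ \oo --> (0 : K)].

Definition cdist (R : rcfType) (z w : R[i]) : R := Normc.normc (z - w).

Local Open Scope ereal_scope.
Definition hausdorff_dist (R : realType) (S T : set R[i]) : \bar R :=
  maxe (ereal_sup [set ereal_inf [set (cdist x y)%:E | y in T] | x in S])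
       (ereal_sup [set ereal_inf [set (cdist x y)%:E | x in S] | y in T]).

(* For commuting x and y with |(x - y)^2| <= eps^2, every point of the
   spectrum of x lies within 2 eps of the spectrum of y.  Otherwise, for such
   a point l, R := (l - y)^-1 commutes with x - y and 1 - u R is invertible
   for |u| <= 3 eps / 2, so that eps^N |R^N| <= 1/2 for some N = 2^k;
   since also |(x - y)^N| <= eps^N, the Neumann series inverts 1 - R (x - y),
   hence l - x = (l - y) (1 - R (x - y)) would be invertible.
   The bound on |R^N| avoids holomorphic calculus: averaging the inverses of
   1 - w u z over the 2^k-th roots of unity w gives the inverse of
   1 - u^(2^k) z^(2^k); these averages are Lipschitz in u uniformly in k,
   because the inverses are bounded on the compact disc, and this propagates
   the decay of s^(2^k) |z^(2^k)| from s = 0 to every s < rho.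
   Finally nu-convergence gives
   |(a_n - a)^2| <= |(a_n - a) a_n| + |(a_n - a) a| --> 0, which bounds both
   halves of the Hausdorff distance. *)

From mathcomp Require Import all_boot all_order all_algebra.
From mathcomp Require Import all_classical all_reals all_analysis.
From mathcomp Require Import complex.
From mathcomp Require Import lra.
Import Order.TTheory GRing.Theory Num.Theory numFieldNormedType.Exports.
Local Open Scope classical_set_scope.
Local Open Scope ring_scope.
Set Implicit Arguments. Unset Strict Implicit. Unset Printing Implicit Defensive.

Section ComplexModulus.
Variable R : rcfType.
Local Notation normc := (@Normc.normc R).

Lemma normc_ge0 (k : R[i]) : 0 <= normc k.
Proof. by case: k => a b; rewrite /Normc.normc sqrtr_ge0. Qed.

Lemma normcD (k l : R[i]) : normc (k + l) <= normc k + normc l.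
Proof. by have := ler_normD k l; rewrite -rmorphD lecR. Qed.

Lemma normcN (k : R[i]) : normc (- k) = normc k.
Proof. by have := normrN k; case. Qed.

Lemma normc_real (a : R) : normc a%:C%C = `|a|.
Proof. by rewrite /Normc.normc /= expr0n /= addr0 sqrtr_sqr. Qed.

Lemma normcX (k : R[i]) n : normc (k ^+ n) = normc k ^+ n.
Proof.
by elim: n => [|n IH]; rewrite ?Normc.normc1 // !exprS Normc.normcM IH.
Qed.

Definition rootN1 (k : nat) : R[i] := (2 ^ k)%N.-root (-1).

Lemma rootN1X k : rootN1 k ^+ (2 ^ k) = -1.
Proof. by rewrite rootCK // expn_gt0. Qed.

Lemma normc_rootN1M k u : normc (rootN1 k * u) = normc u.
Proof.
have : normc (rootN1 k) ^+ (2 ^ k) = 1.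
  by rewrite -normcX rootN1X normcN Normc.normc1.
rewrite -[1](expr1n _ (2 ^ k)) => /eqP; rewrite eqrXn2 ?expn_gt0 ?normc_ge0 //.
by move=> /eqP n1; rewrite Normc.normcM n1 mul1r.
Qed.

End ComplexModulus.

Arguments rootN1 {R} k.

Section ComplexDisc.
Variable R : realType.
Local Notation normc := (@Normc.normc R).

Lemma normc_Re (a b : R) : `|a| <= normc (a +i* b)%C.
Proof.
by rewrite /Normc.normc -sqrtr_sqr ler_wsqrtr // lerDl sqr_ge0.
Qed.

Lemma normc_Im (a b : R) : `|b| <= normc (a +i* b)%C.
Proof.
by rewrite /Normc.normc -sqrtr_sqr ler_wsqrtr // lerDr sqr_ge0.
Qed.

Lemma normc_le_Re_Im (a b : R) : normc (a +i* b)%C <= `|a| + `|b|.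
Proof.
rewrite /Normc.normc -[leRHS]ger0_norm ?addr_ge0 // -sqrtr_sqr ler_wsqrtr //.
rewrite sqrrD !real_normK ?num_real // -addrA lerD2l lerDr.
by rewrite mulrn_wge0 // mulr_ge0.
Qed.

Lemma continuous_complex_pair : continuous (fun p : R * R => (p.1 +i* p.2)%C : R[i]^o).
Proof.
move=> [a b]; apply/cvgrPdist_lt => -[c d]; rewrite ltcE /= => /andP[/eqP -> c0].
have c2 : 0 < c / 2 by rewrite divr_gt0.
exists (ball a (c / 2), ball b (c / 2)); first by split; apply: nbhsx_ballx.
move=> [a' b'] [/= aa' bb']; rewrite -[`|_|]/((normc _)%:C%C) ltcR.
apply: le_lt_trans (normc_le_Re_Im (a - a') (b - b')) _.
by move: aa' bb'; rewrite /ball /= => aa' bb'; rewrite [ltRHS]splitr ltrD.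
Qed.

Lemma compact_disc (rho : R) : compact [set u : R[i]^o | normc u <= rho].
Proof.
have sq : compact (`[- rho, rho] `*` `[- rho, rho]).
  by apply: compact_setX; apply: segment_compact.
apply: (subclosed_compact _ (continuous_compact
  (continuous_subspaceT continuous_complex_pair) sq)).
  move=> u u_cl; rewrite /= leNgt; apply/negP => rho_u.
  have : 0 < (normc u - rho)%:C%C :> R[i] by rewrite ltcR subr_gt0.
  move=> /(nbhsx_ballx u) /u_cl [v [/= v_rho]].
  rewrite /ball /= -[`|_|]/((normc _)%:C%C) ltcR => uv.
  by have := normcD v (u - v); rewrite addrC subrK; lra.
move=> [a b] /= ab_rho; exists (a, b) => //.
by split; rewrite /= in_itv /= -ler_norml; apply: le_trans ab_rho;
  [apply: normc_Re | apply: normc_Im].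
Qed.

End ComplexDisc.

Section BanachAlgebra.
Variables (R : realType) (V : completeNormedModType R[i]) (B : banach_alg V).
Local Notation "x ** y" := (bmul B x y) (at level 40, left associativity).
Local Notation "\1" := (bone B).
Local Notation normc := (@Normc.normc R).

(* The norm of [V] is [R[i]]-valued with zero imaginary part ([rnormE]);
   [rnorm] is the same norm as a real number, within reach of [lra]. *)
Definition rnorm (x : V) : R := complex.Re `|x|.

Lemma rnormE x : `|x| = (rnorm x)%:C%C.
Proof.
have := normr_ge0 x; rewrite /rnorm; case: `|x| => a b /=.
by rewrite /Order.le /= => /andP[/eqP -> _].
Qed.

Lemma rnorm_ge0 x : 0 <= rnorm x.
Proof. by have := normr_ge0 x; rewrite rnormE ler0c. Qed.

Lemma rnormD x y : rnorm (x + y) <= rnorm x + rnorm y.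
Proof. by have := ler_normD x y; rewrite !rnormE -rmorphD lecR. Qed.

Lemma rnormN x : rnorm (- x) = rnorm x.
Proof. by rewrite /rnorm normrN. Qed.

Lemma rnormZ (k : R[i]) x : rnorm (k *: x) = normc k * rnorm x.
Proof. by rewrite /rnorm normrZ rnormE -rmorphM. Qed.

Lemma rnormM x y : rnorm (x ** y) <= rnorm x * rnorm y.
Proof. by have := bnormM B x y; rewrite !rnormE -rmorphM lecR. Qed.

Lemma cvg_rnormP {T : Type} {F : set_system T} {FF : Filter F} (f : T -> V) l :
  f @ F --> l <-> forall c : R, 0 < c -> \forall t \near F, rnorm (l - f t) < c.
Proof.
split=> [/cvgrPdist_lt fl c c0|fl].
  have /fl : 0 < c%:C%C :> R[i] by rewrite ltcR.
  by apply: filterS => t; rewrite rnormE ltcR.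
apply/cvgrPdist_lt => -[c d]; rewrite ltcE /= => /andP[/eqP -> /fl].
by apply: filterS => t; rewrite rnormE ltcR.
Qed.

Lemma bmul0r x : 0 ** x = 0.
Proof. by apply/(addrI (0 ** x)); rewrite -(bmulDl B) !addr0. Qed.

Lemma bmulr0 x : x ** 0 = 0.
Proof. by apply/(addrI (x ** 0)); rewrite -(bmulDr B) !addr0. Qed.

Lemma bmulNl x y : (- x) ** y = - (x ** y).
Proof. by apply/(addrI (x ** y)); rewrite -(bmulDl B) !subrr bmul0r. Qed.

Lemma bmulNr x y : x ** (- y) = - (x ** y).
Proof. by apply/(addrI (x ** y)); rewrite -(bmulDr B) !subrr bmulr0. Qed.

Lemma bmulBl x y z : (x - y) ** z = x ** z - y ** z.
Proof. by rewrite (bmulDl B) bmulNl. Qed.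

Lemma bmulBr x y z : x ** (y - z) = x ** y - x ** z.
Proof. by rewrite (bmulDr B) bmulNr. Qed.

Definition bexp x n := iter n (bmul B x) \1.

Definition bcomm x y := x ** y = y ** x.

Definition binverse x y := y ** x = \1 /\ x ** y = \1.

Definition binvertible x := exists y, binverse x y.

Lemma bexpS x n : bexp x n.+1 = x ** bexp x n.
Proof. by []. Qed.

Lemma bexp1 x : bexp x 1 = x.
Proof. exact: bmul1r. Qed.

Lemma bcomm1 x : bcomm \1 x.
Proof. by rewrite /bcomm (bmul1l B) (bmul1r B). Qed.

Lemma bcommMl x y z : bcomm x z -> bcomm y z -> bcomm (x ** y) z.
Proof. by rewrite /bcomm => xz yz; rewrite -(bmulA B) yz !(bmulA B) xz. Qed.

Lemma bcommB x y z : bcomm x z -> bcomm y z -> bcomm (x - y) z.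
Proof. by rewrite /bcomm => xz yz; rewrite bmulBl bmulBr xz yz. Qed.

Lemma bcommZ k x z : bcomm x z -> bcomm (k *: x) z.
Proof. by rewrite /bcomm => xz; rewrite bmulZl bmulZr xz. Qed.

Lemma bcomm_bexp x y n : bcomm x y -> bcomm (bexp x n) y.
Proof. by move=> xy; elim: n => [|n IH]; [apply: bcomm1 | apply: bcommMl]. Qed.

Lemma bexpSr x n : bexp x n.+1 = bexp x n ** x.
Proof. by rewrite bexpS (bcomm_bexp n (erefl : bcomm x x)). Qed.

Lemma bexpD x m n : bexp x (m + n) = bexp x m ** bexp x n.
Proof.
elim: m => [|m IH]; first by rewrite add0n (bmul1l B).
by rewrite addSn !bexpS IH (bmulA B).
Qed.

Lemma bexpM x m n : bexp x (m * n) = bexp (bexp x m) n.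
Proof. by elim: n => [|n IH]; rewrite ?muln0 // mulnS bexpD IH. Qed.

Lemma bexp_bmul x y n : bcomm x y -> bexp (x ** y) n = bexp x n ** bexp y n.
Proof.
move=> xy; elim: n => [|n IH]; first by rewrite (bmul1l B).
rewrite !bexpS IH !(bmulA B); congr (_ ** _); rewrite -!(bmulA B).
by rewrite (bcomm_bexp n xy).
Qed.

Lemma rnorm_bexp x n : rnorm (bexp x n) <= rnorm \1 * rnorm x ^+ n.
Proof.
elim: n => [|n IH]; first by rewrite mulr1.
rewrite bexpSr (le_trans (rnormM _ _)) // exprSr mulrA.
by rewrite ler_wpM2r ?rnorm_ge0.
Qed.

Lemma rnorm_bexpS x n : rnorm (bexp x n.+1) <= rnorm x ^+ n.+1.
Proof.
elim: n => [|n IH]; first by rewrite bexp1 expr1.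
rewrite bexpSr (le_trans (rnormM _ _)) // [leRHS]exprSr.
by rewrite ler_wpM2r ?rnorm_ge0.
Qed.

Lemma bcomm_binverse x y z : bcomm x z -> binverse x y -> bcomm y z.
Proof.
move=> xz [yx xy]; rewrite /bcomm.
rewrite -[y ** z](bmul1r B) -xy -[z ** y](bmul1l B) -yx.
by rewrite !(bmulA B) -[y ** z ** x](bmulA B) -xz !(bmulA B).
Qed.

Lemma binvertibleM x y : binvertible x -> binvertible y -> binvertible (x ** y).
Proof.
move=> [x' [x'x xx']] [y' [y'y yy']]; exists (y' ** x'); split.
  by rewrite (bmulA B) -[y' ** x' ** x](bmulA B) x'x (bmul1r B) y'y.
by rewrite (bmulA B) -[x ** y ** y'](bmulA B) yy' (bmul1r B) xx'.
Qed.

Lemma binvertible_factorl x y :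
  bcomm x y -> binvertible (x ** y) -> binvertible x.
Proof.
move=> xy [w [wxy xyw]]; exists (y ** w); split; last by rewrite (bmulA B).
have /bcomm_binverse /(_ (conj wxy xyw)) wx : bcomm (x ** y) x.
  by rewrite /bcomm -(bmulA B) -xy (bmulA B).
by rewrite -(bmulA B) wx (bmulA B) -xy.
Qed.

Lemma bmul_cvgl {T : Type} {F : set_system T} {FF : Filter F} (f : T -> V) l c :
  f @ F --> l -> (fun t => f t ** c) @ F --> l ** c.
Proof.
move=> /cvg_rnormP fl; apply/cvg_rnormP => r r0.
have rc0 : 0 < rnorm c + 1 by rewrite ltr_wpDl ?rnorm_ge0.
near=> t; rewrite -bmulBl; apply: le_lt_trans (rnormM _ _) _.
apply: (@le_lt_trans _ _ (rnorm (l - f t) * (rnorm c + 1))).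
  by rewrite ler_wpM2l ?rnorm_ge0 ?lerDl.
by rewrite -ltr_pdivlMr //; near: t; apply: fl; rewrite divr_gt0.
Unshelve. all: by end_near.
Qed.

Lemma bmul_cvgr {T : Type} {F : set_system T} {FF : Filter F} (f : T -> V) l c :
  f @ F --> l -> (fun t => c ** f t) @ F --> c ** l.
Proof.
move=> /cvg_rnormP fl; apply/cvg_rnormP => r r0.
have rc0 : 0 < rnorm c + 1 by rewrite ltr_wpDl ?rnorm_ge0.
near=> t; rewrite -bmulBr; apply: le_lt_trans (rnormM _ _) _.
apply: (@le_lt_trans _ _ ((rnorm c + 1) * rnorm (l - f t))).
  by rewrite ler_wpM2r ?rnorm_ge0 ?lerDl.
by rewrite mulrC -ltr_pdivlMr //; near: t; apply: fl; rewrite divr_gt0.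
Unshelve. all: by end_near.
Qed.

Lemma bexp_series_mull z n : (\1 - z) ** series (bexp z) n = \1 - bexp z n.
Proof.
elim: n => [|n IH]; first by rewrite /series /= big_geq // bmulr0 subrr.
by rewrite seriesSr (bmulDr B) IH bmulBl (bmul1l B) -bexpS addrA subrK.
Qed.

Lemma bexp_series_mulr z n : series (bexp z) n ** (\1 - z) = \1 - bexp z n.
Proof.
elim: n => [|n IH]; first by rewrite /series /= big_geq // bmul0r subrr.
by rewrite seriesSr (bmulDl B) IH bmulBr (bmul1r B) -bexpSr addrA subrK.
Qed.

Lemma binvertible_one_subX z n :
  binvertible (\1 - bexp z n) -> binvertible (\1 - z).
Proof.
rewrite -(bexp_series_mull z n); apply: binvertible_factorl.
by rewrite /bcomm bexp_series_mull bexp_series_mulr.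
Qed.

Lemma rnorm_sum (I : Type) (s : seq I) (P : pred I) (f : I -> V) :
  rnorm (\sum_(i <- s | P i) f i) <= \sum_(i <- s | P i) rnorm (f i).
Proof.
have := ler_norm_sum s f P.
by rewrite rnormE (eq_bigr _ (fun i _ => rnormE (f i))) -rmorph_sum lecR.
Qed.

Lemma geometric_tail_le (q : R) m n : 0 <= q < 1 ->
  \sum_(m <= i < n) q ^+ i <= q ^+ m / (1 - q).
Proof.
move=> /andP[q0 q1]; have q1' : 0 < 1 - q by rewrite subr_gt0.
have [nm|/ltnW mn] := leqP n m.
  by rewrite big_geq // divr_ge0 ?exprn_ge0 // ltW.
rewrite -(subnKC mn) geometric_partial_tail geometric_seriesE ?lt_eqF //=.
rewrite ler_pM2r ?invr_gt0 // ler_piMr ?exprn_ge0 // lerBlDr lerDl.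
by rewrite exprn_ge0.
Qed.

Lemma cvg_bexp0 z : rnorm z < 1 -> bexp z n @[n --> \oo] --> 0.
Proof.
move=> z1; apply/cvg_rnormP => c c0.
have K0 : 0 < rnorm \1 + 1 by rewrite ltr_wpDl ?rnorm_ge0.
have : `|rnorm z| < 1 by rewrite ger0_norm ?rnorm_ge0.
move=> /cvg_expr /cvgr0_norm_lt /(_ _ (divr_gt0 c0 K0)); apply: filterS => n.
rewrite ger0_norm ?exprn_ge0 ?rnorm_ge0 // sub0r rnormN => zn.
apply: le_lt_trans (rnorm_bexp z n) _.
apply: (@le_lt_trans _ _ ((rnorm \1 + 1) * rnorm z ^+ n)).
  by rewrite ler_wpM2r ?exprn_ge0 ?rnorm_ge0 ?lerDl.
by rewrite mulrC -ltr_pdivlMr.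
Qed.

Lemma cvg_bexp_series z : rnorm z < 1 -> cvg (series (bexp z) @ \oo).
Proof.
move=> z1; apply/cauchy_cvgP/cauchy_seriesP => -[c d].
rewrite ltcE /= => /andP[/eqP -> c0].
set q := rnorm z; have q0 : 0 <= q := rnorm_ge0 z.
have q1 : 0 < 1 - q by rewrite subr_gt0.
have K0 : 0 < rnorm \1 + 1 by rewrite ltr_wpDl ?rnorm_ge0.
have : `|q| < 1 by rewrite ger0_norm.
move=> /cvg_expr /cvgr0_norm_lt /(_ (c * (1 - q) / (rnorm \1 + 1))).
case=> [|N _ qN]; first by rewrite !divr_gt0 ?mulr_gt0.
exists ([set m | (N <= m)%N], setT); first by split; [exists N | exact: filterT].
move=> [m n] /= [/qN /= + _]; rewrite ger0_norm ?exprn_ge0 // ltr_pdivlMr // => qm.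
rewrite rnormE ltcR; apply: le_lt_trans (rnorm_sum _ _ _) _.
apply: (@le_lt_trans _ _ (\sum_(m <= k < n) rnorm \1 * q ^+ k)).
  by apply: ler_sum => k _; apply: rnorm_bexp.
rewrite -mulr_sumr; apply: (@le_lt_trans _ _ (rnorm \1 * (q ^+ m / (1 - q)))).
  by rewrite ler_wpM2l ?rnorm_ge0 // geometric_tail_le ?q0.
rewrite mulrA ltr_pdivrMr //; apply: le_lt_trans qm.
by have := exprn_ge0 m q0; nra.
Qed.

Theorem binvertible_one_sub z : rnorm z < 1 -> binvertible (\1 - z).
Proof.
move=> z1; have /cvg_ex [L SL] := cvg_bexp_series z1.
have lim1 : (fun n => \1 - bexp z n) @ \oo --> \1.
  by rewrite -[X in _ --> X]subr0; apply: cvgB; [exact: cvg_cst | exact: cvg_bexp0].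
exists L; split; apply: (cvg_unique _ _ lim1) => //.
  by rewrite -(funext (bexp_series_mulr z)); apply: bmul_cvgl.
by rewrite -(funext (bexp_series_mull z)); apply: bmul_cvgr.
Qed.

Lemma binverse_one_subE y P : binverse (\1 - y) P -> P - \1 = P ** y.
Proof.
move=> [Py _]; have <- : P - P ** y = \1 by rewrite -Py bmulBr (bmul1r B).
by rewrite opprB addrC subrK.
Qed.

Lemma rnorm_le_half_of_inverse y P : binverse (\1 - y) P ->
  rnorm (P - \1) <= 1/3 -> rnorm y <= 1/2.
Proof.
move=> /binverse_one_subE P1 P1_small.
have y_le : rnorm y <= rnorm (P - \1) + rnorm (P - \1) * rnorm y.
  rewrite {1}(_ : y = (P - \1) - (P - \1) ** y); last first.
    by rewrite bmulBl (bmul1l B) -P1 opprB addrC subrK.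
  by apply: le_trans (rnormD _ _) _; rewrite rnormN lerD2l rnormM.
by have := rnorm_ge0 y; have := rnorm_ge0 (P - \1); nra.
Qed.

Lemma rnorm_inverse_sub1_le y P : binverse (\1 - y) P ->
  rnorm y <= 1/2 -> rnorm (P - \1) <= 2 * rnorm \1 * rnorm y.
Proof.
move=> /binverse_one_subE P1 y_small; rewrite P1.
have P_le : rnorm P <= 2 * rnorm \1.
  have := rnormD (P - \1) \1; rewrite subrK P1.
  have := rnormM P y; have := rnorm_ge0 P; have := rnorm_ge0 y; nra.
apply: le_trans (rnormM _ _) _.
by rewrite ler_wpM2r ?rnorm_ge0.
Qed.

(* [1/(1 - y^2) = (1/(1 - y) + 1/(1 + y)) / 2] *)
Lemma binverse_one_sub_sqr y P Q : binverse (\1 - y) P -> binverse (\1 + y) Q ->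
  binverse (\1 - y ** y) (2^-1 *: (P + Q)).
Proof.
move=> [P1 P2] [Q1 Q2].
have sqrE : \1 - y ** y = (\1 - y) ** (\1 + y).
  by rewrite bmulBl (bmul1l B) (bmulDr B) (bmul1r B) opprD addrA addrK.
have sqrE' : \1 - y ** y = (\1 + y) ** (\1 - y).
  by rewrite (bmulDl B) (bmul1l B) bmulBr (bmul1r B) addrA subrK.
have half2 : (2^-1 : R[i]) *: (\1 + \1) = \1.
  by rewrite scalerDr -scalerDl -[2^-1]mul1r -splitr scale1r.
split.
  rewrite bmulZl (bmulDl B) {1}sqrE {1}sqrE' !(bmulA B) P1 Q1 !(bmul1l B).
  by rewrite addrACA subrr addr0 half2.
rewrite bmulZr (bmulDr B) {1}sqrE' {1}sqrE -!(bmulA B) P2 Q2 !(bmul1r B).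
by rewrite addrACA subrr addr0 half2.
Qed.

Section SpectralRadius.
Variables (z : V) (rho : R).
Hypothesis invertible_disc : forall u, normc u <= rho -> binvertible (\1 - u *: z).

Definition resolvent (u : R[i]) : V := xget 0 (binverse (\1 - u *: z)).

Lemma resolventP u : normc u <= rho -> binverse (\1 - u *: z) (resolvent u).
Proof. by move=> /invertible_disc; apply: xgetPex. Qed.

Lemma resolventB u v : normc u <= rho -> normc v <= rho ->
  resolvent u - resolvent v = (u - v) *: (resolvent u ** z ** resolvent v).
Proof.
move=> /resolventP [uu' u'u] /resolventP [vv' v'v].
rewrite -{1}[resolvent u](bmul1r B) -{1}v'v (bmulA B).
rewrite -{2}[resolvent v](bmul1l B) -{2}uu' -bmulBl -bmulBr.
by rewrite opprB addrC addrA subrK -scalerBl bmulZr bmulZl.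
Qed.

Lemma rnorm_resolvent_near u0 u : normc u0 <= rho -> normc u <= rho ->
  normc (u0 - u) * (rnorm (resolvent u0) * rnorm z) <= 1/2 ->
  rnorm (resolvent u) <= 2 * rnorm (resolvent u0).
Proof.
move=> u0_rho u_rho near_u0.
have : rnorm (resolvent u0 - resolvent u)
    <= normc (u0 - u) * (rnorm (resolvent u0) * rnorm z) * rnorm (resolvent u).
  rewrite resolventB // rnormZ -mulrA ler_wpM2l ?normc_ge0 //.
  apply: le_trans (rnormM _ _) _; rewrite ler_wpM2r ?rnorm_ge0 //.
  exact: rnormM.
have := rnormD (resolvent u0) (- (resolvent u0 - resolvent u)).
rewrite rnormN opprB addrC subrK.
by have := rnorm_ge0 (resolvent u); nra.
Qed.

Lemma resolvent_bounded :
  exists2 M, 0 < M & forall u, normc u <= rho -> rnorm (resolvent u) <= M.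
Proof.
have := (compact_near_coveringP _).1 (compact_disc (rho := rho)) R (pinfty_nbhs R)
  (fun M u => normc u <= rho -> rnorm (resolvent u) <= M).
case=> [u0 /= u0_rho|M [_ M_bound]]; last first.
  exists (`|M| + 1) => [|u u_rho]; first by rewrite ltr_wpDl.
  by apply: M_bound => //; rewrite (le_lt_trans (ler_norm M)) // ltrDl.
set c := rnorm (resolvent u0) * rnorm z + 1.
have c_gt0 : 0 < c by rewrite ltr_wpDl ?mulr_ge0 ?rnorm_ge0.
have delta_gt0 : 0 < (1 / (2 * c))%:C%C :> R[i].
  by rewrite ltcR divr_gt0 // mulr_gt0.
exists (ball u0 (1 / (2 * c))%:C%C, [set M | 2 * rnorm (resolvent u0) < M]).
  by split; [exact: nbhsx_ballx | apply: nbhs_pinfty_gt; apply: num_real].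
move=> [u M] [/= u0u M_gt] u_rho; apply: le_trans (ltW M_gt).
apply: rnorm_resolvent_near => //.
move: u0u; rewrite /ball /= -[`|_|]/((normc _)%:C%C) ltcR => u0u.
have : rnorm (resolvent u0) * rnorm z <= c by rewrite lerDl.
have : 1 / (2 * c) * c = 1 / 2.
  by rewrite !mul1r invfM -mulrA mulVf ?mulr1 // lt0r_neq0.
by have := normc_ge0 (u0 - u); nra.
Qed.

Lemma resolvent_lipschitz M :
  (forall u, normc u <= rho -> rnorm (resolvent u) <= M) ->
  forall u v, normc u <= rho -> normc v <= rho ->
  rnorm (resolvent u - resolvent v) <= normc (u - v) * (M * M * rnorm z).
Proof.
move=> bound u v u_rho v_rho; rewrite resolventB // rnormZ ler_wpM2l ?normc_ge0 //.
have M_ge0 : 0 <= M by apply: le_trans (bound _ u_rho); apply: rnorm_ge0.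
apply: le_trans (rnormM _ _) _; rewrite [leRHS]mulrAC.
apply: ler_pM; rewrite ?rnorm_ge0 ?bound //.
by apply: le_trans (rnormM _ _) _; apply: ler_pM; rewrite ?rnorm_ge0 ?bound.
Qed.

(* The mean of [resolvent] over the points [u * w] with [w ^+ (2 ^ k) = 1]. *)
Fixpoint resolvent_avg (k : nat) (u : R[i]) : V :=
  if k is k'.+1 then
    2^-1 *: (resolvent_avg k' u + resolvent_avg k' (rootN1 k' * u))
  else resolvent u.

Lemma resolvent_avgP k u : normc u <= rho ->
  binverse (\1 - u ^+ (2 ^ k) *: bexp z (2 ^ k)) (resolvent_avg k u).
Proof.
elim: k u => [|k IH] u u_rho; first by rewrite expr1 bexp1; apply: resolventP.
have := IH (rootN1 k * u); rewrite normc_rootN1M => /(_ u_rho).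
rewrite exprMn rootN1X mulN1r scaleNr opprK.
have -> : u ^+ (2 ^ k.+1) *: bexp z (2 ^ k.+1) =
          (u ^+ (2 ^ k) *: bexp z (2 ^ k)) ** (u ^+ (2 ^ k) *: bexp z (2 ^ k)).
  by rewrite bmulZl bmulZr scalerA -exprD -bexpD expnS mul2n -addnn.
exact/binverse_one_sub_sqr/IH.
Qed.

Lemma resolvent_avg_lipschitz M :
  (forall u, normc u <= rho -> rnorm (resolvent u) <= M) ->
  forall k u v, normc u <= rho -> normc v <= rho ->
  rnorm (resolvent_avg k u - resolvent_avg k v) <= normc (u - v) * (M * M * rnorm z).
Proof.
move=> bound; elim=> [|k IH] u v u_rho v_rho /=; first exact: resolvent_lipschitz.
set L := normc (u - v) * _.
have L_rot : rnorm (resolvent_avg k (rootN1 k * u) - resolvent_avg k (rootN1 k * v)) <= L.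
  by rewrite /L -(normc_rootN1M k (u - v)) mulrBr IH ?normc_rootN1M.
rewrite -scalerBr rnormZ opprD addrACA Normc.normcV normcMn Normc.normc1.
have := rnormD (resolvent_avg k u - resolvent_avg k v)
  (resolvent_avg k (rootN1 k * u) - resolvent_avg k (rootN1 k * v)).
by have := IH u v u_rho v_rho; rewrite -/L; lra.
Qed.

Definition decays (s : R) := forall c, 0 < c ->
  \forall k \near \oo, s ^+ (2 ^ k) * rnorm (bexp z (2 ^ k)) <= c.

Lemma decays0 : decays 0.
Proof.
by move=> c c0; apply: nearW => k; rewrite expr0n expn_eq0 /= mul0r ltW.
Qed.

Lemma decays_lt s s' : 0 <= s -> s < s' ->
  (\forall k \near \oo, s' ^+ (2 ^ k) * rnorm (bexp z (2 ^ k)) <= 1/2) ->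
  decays s.
Proof.
move=> s0 ss' s'_half c c0; have s'0 : 0 < s' by apply: le_lt_trans ss'.
set q := s / s'; have q0 : 0 <= q by rewrite divr_ge0 // ltW.
have q1 : q < 1 by rewrite ltr_pdivrMr // mul1r.
have : `|q| < 1 by rewrite ger0_norm.
have c20 : 0 < 2 * c by rewrite mulr_gt0.
move=> /cvg_expr /cvgr0_norm_lt /(_ _ c20) q_small.
near=> k; rewrite -[s](mulfVK (lt0r_neq0 s'0)) -/q exprMn -mulrA.
have qk : q ^+ (2 ^ k) <= 2 * c.
  apply: le_trans (_ : q ^+ k <= 2 * c).
    by apply: ler_wiXn2l => //; [exact: ltW | exact/ltnW/ltn_expl].
  near: k; apply: filterS q_small => k /ltW.
  by rewrite ger0_norm ?exprn_ge0.
apply: (@le_trans _ _ (q ^+ (2 ^ k) * (1/2))).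
  by rewrite ler_wpM2l ?exprn_ge0 //; near: k.
by move: qk; lra.
Unshelve. all: by end_near.
Qed.

Lemma decays_step M delta :
  (forall u, normc u <= rho -> rnorm (resolvent u) <= M) ->
  0 < delta -> delta * (M * M * rnorm z) <= 1/6 ->
  forall s1 s2, 0 <= s1 <= rho -> 0 <= s2 <= rho -> `|s2 - s1| <= delta ->
  decays s1 -> \forall k \near \oo, s2 ^+ (2 ^ k) * rnorm (bexp z (2 ^ k)) <= 1/2.
Proof.
move=> bound delta0 delta_small s1 s2 /andP[s1_ge0 s1_rho] /andP[s2_ge0 s2_rho] s12.
have M0 : 0 <= M.
  apply: le_trans (rnorm_ge0 _) (bound 0 _).
  by rewrite Normc.normc0 (le_trans s1_ge0).
set c := 1 / (12 * (rnorm \1 + 1)).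
have c0 : 0 < c by rewrite divr_gt0 // mulr_gt0 // ltr_wpDl ?rnorm_ge0.
have c_small : 2 * rnorm \1 * c <= 1/6.
  by rewrite mulrA ler_pdivrMr ?mulr_gt0 ?ltr_wpDl ?rnorm_ge0 //; have := rnorm_ge0 \1; lra.
have c_half : c <= 1/2.
  by rewrite ler_pdivrMr ?mulr_gt0 ?ltr_wpDl ?rnorm_ge0 //; have := rnorm_ge0 \1; lra.
move=> /(_ c c0); apply: filterS => k s1k.
have scaleE s : 0 <= s -> rnorm (s%:C%C ^+ (2 ^ k) *: bexp z (2 ^ k))
    = s ^+ (2 ^ k) * rnorm (bexp z (2 ^ k)).
  by move=> s0; rewrite rnormZ normcX normc_real ger0_norm.
have u1 : normc s1%:C%C <= rho by rewrite normc_real ger0_norm.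
have u2 : normc s2%:C%C <= rho by rewrite normc_real ger0_norm.
rewrite -scaleE //; apply: rnorm_le_half_of_inverse (resolvent_avgP k u2) _.
have A1_near1 : rnorm (resolvent_avg k s1%:C%C - \1) <= 1/6.
  have s1k_half : rnorm (s1%:C%C ^+ (2 ^ k) *: bexp z (2 ^ k)) <= 1/2.
    by rewrite scaleE //; apply: le_trans s1k c_half.
  apply: le_trans (rnorm_inverse_sub1_le (resolvent_avgP k u1) s1k_half) _.
  apply: le_trans c_small; rewrite scaleE // ler_wpM2l // mulr_ge0 ?rnorm_ge0 //.
have A12 : rnorm (resolvent_avg k s2%:C%C - resolvent_avg k s1%:C%C) <= 1/6.
  apply: le_trans (resolvent_avg_lipschitz bound k u2 u1) _.
  rewrite -rmorphB normc_real; apply: le_trans delta_small.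
  by rewrite ler_wpM2r // !mulr_ge0 ?rnorm_ge0.
by have := rnormD (resolvent_avg k s2%:C%C - resolvent_avg k s1%:C%C)
  (resolvent_avg k s1%:C%C - \1); rewrite addrA subrK; lra.
Qed.

Theorem decays_lt_rho s : 0 <= s -> s < rho -> decays s.
Proof.
have [M M0 bound] := resolvent_bounded.
have K0 : 0 <= M * M * rnorm z by rewrite !mulr_ge0 ?rnorm_ge0 ?ltW.
set delta := 1 / (6 * (M * M * rnorm z + 1)).
have K1 : 0 < 6 * (M * M * rnorm z + 1) by rewrite mulr_gt0 // ltr_wpDl.
have delta0 : 0 < delta by rewrite divr_gt0.
have delta_small : delta * (M * M * rnorm z) <= 1/6.
  by rewrite mulrC mulrA ler_pdivrMr //; lra.
have succ s1 s' : 0 <= s1 <= s' -> s' < rho -> s' < s1 + delta -> decays s1 -> decays s'.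
  move=> /andP[s1_ge0 s1s'] s'_rho s'_delta s1_decays.
  have [s2 [s2_rho s's2 s2_s1]] : exists s2, [/\ s2 <= rho, s' < s2 & s2 <= s1 + delta].
    by case: (leP rho (s1 + delta)) => h; [exists rho | exists (s1 + delta)]; split; lra.
  apply: (decays_lt _ s's2); first lra.
  apply: (decays_step bound delta0 delta_small (s1 := s1)) => //.
  - by apply/andP; split; lra.
  - by apply/andP; split; lra.
  - by rewrite ger0_norm; lra.
suff decays_n n s' : 0 <= s' -> s' < rho -> s' <= n%:R * (delta / 2) -> decays s'.
  move=> s0 s_rho; apply: (decays_n (Num.Def.trunc (s / (delta / 2))).+1) => //.
  have := truncnS_gt (s / (delta / 2)).
  by rewrite ltr_pdivrMr ?divr_gt0 // => /ltW.
elim: n s' => [|n IH] s' s'0 s'_rho.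
  rewrite mul0r => s'_le0; have -> : s' = 0 by lra.
  exact: decays0.
rewrite -natr1 mulrDl mul1r => s'_n.
have [s'_small|s'_big] := leP s' (delta / 2).
  by apply: (succ 0); [apply/andP; split; lra | | lra | exact: decays0].
by apply: (succ (s' - delta / 2)); [apply/andP; split; lra | | lra | apply: IH; lra].
Qed.

End SpectralRadius.

Lemma rnorm_bexp2X d eps k : 0 <= eps -> rnorm (bexp d 2) <= eps ^+ 2 ->
  rnorm (bexp d (2 ^ k.+1)) <= eps ^+ (2 ^ k.+1).
Proof.
move=> eps0 d2; rewrite expnS bexpM exprM.
have := expn_gt0 2 k; case: (2 ^ k)%N => // n _.
apply: le_trans (rnorm_bexpS _ _) _.
by rewrite lerXn2r ?nnegrE ?rnorm_ge0 ?exprn_ge0.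
Qed.

Lemma nu_cvg_sqr (a_ : nat -> V) a :
  nu_cvg B a_ a -> bexp (a_ n - a) 2 @[n --> \oo] --> 0.
Proof.
move=> [_ /norm_cvg0 lim_a /norm_cvg0 lim_an].
rewrite -(subrr 0); under eq_fun do rewrite bexpS bexp1 bmulBr.
exact: cvgB.
Qed.

Lemma bexp2N x : bexp (- x) 2 = bexp x 2.
Proof. by rewrite bexpS bexp1 [bexp x 2]bexpS bexp1 bmulNl bmulNr opprK. Qed.

Theorem spectrum_bcomm_close x y eps : 0 < eps -> bcomm x y ->
  rnorm (bexp (x - y) 2) <= eps ^+ 2 ->
  forall l, spectrum B x l -> exists2 m, spectrum B y m & normc (l - m) <= 2 * eps.
Proof.
move=> eps0 xy d2 l x_l; apply: contrapT => far; apply: x_l.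
have y_res u : normc u <= 3/2 * eps -> binvertible ((l - u) *: \1 - y).
  move=> u_le; apply: contrapT => y_lu; apply: far; exists (l - u) => //.
  by rewrite opprB addrC subrK; lra.
have [Ry Ry_inv] : binvertible (l *: \1 - y).
  by rewrite -[l]subr0; apply: y_res; rewrite Normc.normc0; lra.
have Ry_x : bcomm Ry x.
  apply: (bcomm_binverse _ Ry_inv).
  by apply: bcommB; [apply: bcommZ; apply: bcomm1 | exact/esym].
have Ry_y : bcomm Ry y.
  apply: (bcomm_binverse _ Ry_inv).
  by apply: bcommB; [apply: bcommZ; apply: bcomm1 | ].
have Ry_disc u : normc u <= 3/2 * eps -> binvertible (\1 - u *: Ry).
  move=> /y_res y_lu; have [Ry1 Ry2] := Ry_inv.
  have -> : \1 - u *: Ry = Ry ** ((l - u) *: \1 - y).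
    by rewrite scalerBl addrAC bmulBr Ry1 bmulZr (bmul1r B).
  by apply: binvertibleM y_lu; exists (l *: \1 - y).
have eps_rho : eps < 3/2 * eps by lra.
have half0 : 0 < 1 / 2 :> R by rewrite divr_gt0.
have [K _ RK] := decays_lt_rho Ry_disc (ltW eps0) eps_rho half0.
set N := (2 ^ K.+1)%N.
have RK1 : eps ^+ N * rnorm (bexp Ry N) <= 1/2 := RK K.+1 (leqnSn K).
have dN : rnorm (bexp (x - y) N) <= eps ^+ N := rnorm_bexp2X K (ltW eps0) d2.
have : binvertible (\1 - Ry ** (x - y)).
  apply: (binvertible_one_subX (n := N)); apply: binvertible_one_sub.
  rewrite bexp_bmul; last by rewrite /bcomm bmulBr bmulBl Ry_x Ry_y.
  apply: le_lt_trans (rnormM _ _) _.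
  apply: (@le_lt_trans _ _ (rnorm (bexp Ry N) * eps ^+ N)).
    by rewrite ler_wpM2l ?rnorm_ge0.
  by rewrite mulrC; apply: le_lt_trans RK1 _; rewrite ltr_pdivrMr // mul1r ltr1n.
have -> : l *: \1 - x = (l *: \1 - y) ** (\1 - Ry ** (x - y)).
  have [_ Ry2] := Ry_inv.
  by rewrite bmulBr (bmul1r B) (bmulA B) Ry2 (bmul1l B) opprB addrA subrK.
by apply: binvertibleM; exists Ry.
Qed.

End BanachAlgebra.

Section HausdorffDistance.
Variable R : realType.

Lemma hausdorff_dist_le (S T : set R[i]) (eps : R) : T !=set0 ->
  (forall x, S x -> exists2 y, T y & cdist x y <= eps) ->
  (forall y, T y -> exists2 x, S x & cdist x y <= eps) ->
  (0 <= hausdorff_dist S T <= eps%:E)%E.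
Proof.
move=> [y0 Ty0] ST TS; apply/andP; split.
  rewrite le_max; apply/orP; right.
  apply: le_trans (ereal_sup_ubound _); last by exists y0.
  by apply: le_ereal_inf_tmp => _ [x _ <-]; rewrite lee_fin /cdist normc_ge0.
rewrite ge_max; apply/andP; split; apply: ge_ereal_sup => _ [x Sx <-].
  have [y Ty xy] := ST x Sx; apply: le_trans (ereal_inf_lbound _) _.
    by exists y.
  by rewrite lee_fin.
have [x' Sx' xx'] := TS x Sx; apply: le_trans (ereal_inf_lbound _) _.
  by exists x'.
by rewrite lee_fin.
Qed.

Lemma cvge0_squeeze (h : nat -> \bar R) :
  (forall eps : R, 0 < eps -> \forall n \near \oo, (0 <= h n <= eps%:E)%E) ->
  h @ \oo --> 0%E.
Proof.
move=> h_small; apply/fine_cvgP; split.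
  apply: filterS (h_small 1 ltr01) => n /andP[h0 h1].
  by rewrite fin_numElt (lt_le_trans _ h0) ?ltNy0 //= (le_lt_trans h1) ?ltry.
apply/cvgrPdist_le => eps eps0; apply: filterS (h_small eps eps0) => n /=.
case: (h n) => [r| |] /andP[r0 r_eps].
- by rewrite !lee_fin in r0 r_eps; rewrite sub0r normrN ger0_norm.
- by rewrite leye_eq in r_eps.
- by rewrite leeNy_eq in r0.
Qed.

End HausdorffDistance.

Theorem proposition2p1 (R : realType) (V : completeNormedModType R[i])
    (B : banach_alg V) (a : V) (a_ : nat -> V) :
  (forall n, bmul B (a_ n) a = bmul B a (a_ n)) ->
  (forall n m, bmul B (a_ n) (a_ m) = bmul B (a_ m) (a_ n)) ->
  nu_cvg B a_ a ->
  limit_point (spectrum B a) 0 ->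
  (fun n => hausdorff_dist (spectrum B (a_ n)) (spectrum B a)) @ \oo --> 0%E.
Proof.
(* The [a_ n] need not commute with each other, and the accumulation point
   is only used to know that [spectrum B a] is not empty. *)
move=> a_comm _ a_nu zero_acc.
have [m0 [_ a_m0 _]] := zero_acc setT filterT.
apply: cvge0_squeeze => eps eps0.
have eps20 : 0 < eps / 2 by rewrite divr_gt0.
have eps2E : 2 * (eps / 2) = eps by rewrite mulrC divfK ?pnatr_eq0.
have /cvg_rnormP /(_ _ (exprn_gt0 2 eps20)) := nu_cvg_sqr a_nu.
apply: filterS => n; rewrite sub0r rnormN => /ltW d2.
apply: hausdorff_dist_le; first by exists m0.
  move=> x /(spectrum_bcomm_close eps20 (a_comm n) d2) [m a_m xm].
  by exists m; rewrite // /cdist -eps2E.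
rewrite -bexp2N opprB in d2.
move=> y /(spectrum_bcomm_close eps20 (esym (a_comm n)) d2) [x an_x yx].
by exists x; rewrite // /cdist -normcN opprB -eps2E.
Qed.
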